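(* Let $(S,<_S)$ be an order. The following are equivalent: (1) $(S,<_S)$ does not embed $R_{2,2}$; (2) for every $x,x'\in S$ the sets $u(x),u(x')$ are $\subseteq$-comparable; (3) for every $x,x'\in S$ the sets $d(x),d(x')$ are $\subseteq$-comparable.
   Context: An order $(S,<_S)$ is a set with a strict partial order (antisymmetric, transitive). An embedding of $(S,<_S)$ into $(R,<_R)$ is an injection $\pi$ with $x<_S y\iff\pi(x)<_R\pi(y)$. $R_{2,2}$ is the order on four elements $\{x_0,x_1,y_0,y_1\}$ whose only relations are $x_0<y_0$ and $x_1<y_1$. For $x\in S$: $d(x)=\{z\in S\mid z<_S x\}$ and $u(x)=\{z\in S\mid x<_S z\}$. *)

Definition strict_order {S : Type} (lt : S -> S -> Prop) : Prop :=
  (forall x, ~ lt x x) /\ (forall x y z, lt x y -> lt y z -> lt x z).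

Definition embedding {S R : Type} (ltS : S -> S -> Prop) (ltR : R -> R -> Prop)
  (pi : S -> R) : Prop :=
  (forall x y, pi x = pi y -> x = y) /\
  (forall x y, ltS x y <-> ltR (pi x) (pi y)).

Definition embeds {S R : Type} (ltS : S -> S -> Prop) (ltR : R -> R -> Prop) : Prop :=
  exists pi : S -> R, embedding ltS ltR pi.

Inductive R22 : Type := x0 | x1 | y0 | y1.

Definition R22_lt (a b : R22) : Prop :=
  (a = x0 /\ b = y0) \/ (a = x1 /\ b = y1).

Definition dset {S : Type} (lt : S -> S -> Prop) (x : S) : S -> Prop := fun z => lt z x.
Definition uset {S : Type} (lt : S -> S -> Prop) (x : S) : S -> Prop := fun z => lt x z.

Definition subset {S : Type} (A B : S -> Prop) : Prop := forall z, A z -> B z.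

Definition comparable_sets {S : Type} (A B : S -> Prop) : Prop :=
  subset A B \/ subset B A.

(* Both (2) and (3) say that there is no "crossing" x < y, x' < y' with
   x not below y' and x' not below y: incomparable up-sets of x, x' are
   witnessed by such y, y', and incomparable down-sets of y, y' by such x, x'.
   In a strict order the four points of a crossing are pairwise distinct and
   carry no further relations, so a crossing is exactly a copy of R_{2,2}. *)

From Stdlib Require Import Classical.

Lemma not_comparable_sets {T : Type} (A B : T -> Prop) :
  ~ comparable_sets A B -> exists a b, A a /\ ~ B a /\ B b /\ ~ A b.
Proof.
  unfold comparable_sets, subset; intros Hnc.
  apply not_or_and in Hnc as [HAB HBA].
  apply not_all_ex_not in HAB as [a Ha]; apply imply_to_and in Ha.
  apply not_all_ex_not in HBA as [b Hb]; apply imply_to_and in Hb.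
  exists a, b; tauto.
Qed.

Lemma pairwise_comparable_iff {T U : Type} (F : T -> U -> Prop) :
  (forall x x', comparable_sets (F x) (F x')) <->
  ~ exists x x' a b, F x a /\ F x' b /\ ~ F x b /\ ~ F x' a.
Proof.
  split.
  - intros Hcmp [x [x' [a [b [Ha [Hb [Hnb Hna]]]]]]].
    destruct (Hcmp x x') as [Hsub | Hsub]; auto.
  - intros Hno x x'; apply NNPP; intros Hnc.
    apply not_comparable_sets in Hnc as [a [b Hab]].
    apply Hno; exists x, x', a, b; tauto.
Qed.

Section Crossing.

Variables (S : Type) (lt : S -> S -> Prop).

Definition crossing (x x' y y' : S) : Prop :=
  lt x y /\ lt x' y' /\ ~ lt x y' /\ ~ lt x' y.

Definition has_crossing : Prop := exists x x' y y', crossing x x' y y'.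

Lemma uset_comparable_iff :
  (forall x x', comparable_sets (uset lt x) (uset lt x')) <-> ~ has_crossing.
Proof. exact (pairwise_comparable_iff (uset lt)). Qed.

Lemma dset_comparable_iff :
  (forall y y', comparable_sets (dset lt y) (dset lt y')) <-> ~ has_crossing.
Proof.
  rewrite (pairwise_comparable_iff (dset lt)); unfold has_crossing, crossing, dset.
  split; intros Hno [p [q [r [s Hc]]]]; apply Hno.
  - exists r, s, p, q; tauto.
  - exists r, s, p, q; tauto.
Qed.

Definition R22_map (x x' y y' : S) (p : R22) : S :=
  match p with x0 => x | x1 => x' | y0 => y | y1 => y' end.

Lemma crossing_embedding (x x' y y' : S) :
  strict_order lt -> crossing x x' y y' -> embedding R22_lt lt (R22_map x x' y y').
Proof.
  intros [Hirr Htr] [Hxy [Hx'y' [Hxy' Hx'y]]]; unfold not in *.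
  assert (Hreflect : forall p q, lt (R22_map x x' y y' p) (R22_map x x' y y' q) ->
                                 R22_lt p q).
  { unfold R22_lt; intros p q Hpq; destruct p, q; simpl in Hpq; auto;
      exfalso; eauto 6. }
  split.
  - intros p q Hpq; destruct p, q; simpl in Hpq; auto; subst; exfalso; eauto.
  - intros p q; split; [| apply Hreflect].
    intros [[-> ->] | [-> ->]]; assumption.
Qed.

Lemma embeds_R22_iff_has_crossing :
  strict_order lt -> embeds R22_lt lt <-> has_crossing.
Proof.
  intros Hord; split.
  - intros [pi [_ Hlt]]; exists (pi x0), (pi x1), (pi y0), (pi y1).
    unfold crossing; rewrite <- !Hlt; unfold R22_lt.
    repeat split; try (intros [[? ?] | [? ?]]); auto; discriminate.
  - intros [x [x' [y [y' Hc]]]].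
    exists (R22_map x x' y y'); apply crossing_embedding; assumption.
Qed.

End Crossing.

Theorem lemma2p4 (S : Type) (ltS : S -> S -> Prop) (Hord : strict_order ltS) :
  (~ embeds R22_lt ltS <->
     (forall x x' : S, comparable_sets (uset ltS x) (uset ltS x'))) /\
  ((forall x x' : S, comparable_sets (uset ltS x) (uset ltS x')) <->
     (forall x x' : S, comparable_sets (dset ltS x) (dset ltS x'))).
Proof.
  rewrite uset_comparable_iff, dset_comparable_iff, embeds_R22_iff_has_crossing
    by exact Hord.
  tauto.
Qed.
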